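(* Let $L>0$, $D\subseteq\mathbb{R}$ compact, and let $w$ be a null sequence. Let $\mathcal{M}_w$ be a set of filters of the form $M_h^T$, where $T$ is a convergent input-dependent CPTP map on some number $n$ of qubits and $h:\mathcal{D}(\mathbb{C}^{2^n})\to\mathbb{R}$, each of which is a $w$-fading memory filter, and let $\mathcal{F}_w$ be the family of corresponding $w$-fading memory functionals $F_h^T$ on $K_L^-(D)$. If $\mathcal{F}_w$ is a (polynomial) subalgebra of $C(K_L^-(D),\|\cdot\|_w)$ (closed under sums, real scalar multiples and products), contains the constant functionals, and separates points of $K_L^-(D)$, then $\mathcal{F}_w$ is dense in $C(K_L^-(D),\|\cdot\|_w)$ (with respect to the supremum norm). That is, for any $w$-fading memory (time-invariant, causal) filter $M_*:K_L(D)\to\mathbb{R}^{\mathbb{Z}}$ and any $\epsilon>0$, there exists $M_h^T\in\mathcal{M}_w$ such that for all $u\in K_L(D)$, $\sup_{k\in\mathbb{Z}}|M_*(u)_k-M_h^T(u)_k|<\epsilon$.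
   Context: $K_L(D)$: real sequences $u=\{u_k\}_{k\in\mathbb{Z}}$ with $u_k\in D\cap[-L,L]$; $K_L^-(D)$: such sequences indexed by $\mathbb{Z}^-=\{\dots,-1,0\}$. An input-dependent CPTP map $T$ on $n$ qubits assigns to each $x\in D\cap[-L,L]$ a CPTP map $T(x)$ on $2^n\times2^n$ matrices; it is convergent w.r.t. $K_L(D)$ if there is $\delta_k\to0$ such that for every input $\{u_k\}_{k\ge1}$ in $D\cap[-L,L]$ and any two density-operator sequences with $\rho_{j,k}=T(u_k)\rho_{j,k-1}$, $\|\rho_{1,k}-\rho_{2,k}\|_2\le\delta_k$ (Schatten 2-norm). The induced filter is $M_h^T(u)_k=h\big(\lim_{N\to\infty}T(u_k)T(u_{k-1})\cdots T(u_{k-N})\rho_{-N}\big)$, assumed independent of the initial density operators. A filter $M:K_L(D)\to\mathbb{R}^{\mathbb{Z}}$ is causal if $M(u)_k=M(v)_k$ whenever $u_j=v_j$ for all $j\le k$, and time-invariant if it commutes with the shifts $(M_\tau u)_k=u_{k-\tau}$. Its corresponding functional is $F(u_-)=M(u)_0$ for $u_-\in K_L^-(D)$ and any $u\in K_L(D)$ agreeing with $u_-$ on $\mathbb{Z}^-$; the filter is recovered by $M(u)_k=F(P\circ M_{-k}(u))$, with $P$ truncation to indices $\le0$. A null sequence is a decreasing $w:\{0,1,2,\dots\}\to(0,1]$ with $w_k\to0$; the weighted norm is $\|u\|_w=\sup_{k\in\mathbb{Z}^-}|u_k|w_{-k}$. A time-invariant causal filter is $w$-fading memory iff its functional is continuous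 on $(K_L^-(D),\|\cdot\|_w)$; $C(K_L^-(D),\|\cdot\|_w)$ denotes the real-valued continuous functionals on this space. *)

From mathcomp Require Import all_boot all_order all_algebra.
From mathcomp Require Import all_classical all_reals all_analysis.
From mathcomp Require Import complex mxtens.

Set Implicit Arguments.
Unset Strict Implicit.
Unset Printing Implicit Defensive.

Import Order.TTheory GRing.Theory Num.Theory.
Import numFieldNormedType.Exports.
Local Open Scope classical_set_scope.
Local Open Scope ring_scope.

Section QRC.
Variable R : realType.

Definition adjmx {m n : nat} (A : 'M[R[i]]_(m, n)) : 'M[R[i]]_(n, m) :=
  (map_mx (@Num.conj _) A)^T.

(* positive semidefinite: v^* A v is a nonnegative real for every v
   (in the ordered field R[i], 0 <= z means z real and z >= 0) *)
Definition psdmx {N : nat} (A : 'M[R[i]]_N) : Prop :=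
  forall v : 'cV[R[i]]_N, 0 <= (adjmx v *m A *m v) 0 0.

Definition is_density {N : nat} (A : 'M[R[i]]_N) : Prop :=
  [/\ adjmx A = A, psdmx A & \tr A = 1].

Definition hs_norm {N : nat} (A : 'M[R[i]]_N) : R :=
  Num.sqrt (\sum_(i < N) \sum_(j < N) (ComplexField.Normc.normc (A i j)) ^+ 2).

(* (id_m (x) T) acting on m*N x m*N matrices viewed as m x m blocks of N x N matrices *)
Definition ampliate {N : nat} (m : nat) (T : 'M[R[i]]_N -> 'M[R[i]]_N)
  (X : 'M[R[i]]_(m * N)) : 'M[R[i]]_(m * N) :=
  \matrix_(i, j)
    (let ab := mxtens_unindex i in let cd := mxtens_unindex j in
     T (\matrix_(b, d) X (mxtens_index (ab.1, b)) (mxtens_index (cd.1, d)))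
       ab.2 cd.2).

Definition cptp {N : nat} (T : 'M[R[i]]_N -> 'M[R[i]]_N) : Prop :=
  [/\ (forall (a : R[i]) (X Y : 'M[R[i]]_N), T (a *: X + Y) = a *: T X + T Y),
      (forall X, \tr (T X) = \tr X) &
      (forall (m : nat) (X : 'M[R[i]]_(m * N)), psdmx X -> psdmx (ampliate T X))].

Definition inDL (D : set R) (L : R) (x : R) : Prop := D x /\ `|x| <= L.

Definition in_K (D : set R) (L : R) (u : int -> R) : Prop := forall k, inDL D L (u k).

(* K_L^-(D): a left-infinite sequence (u_k)_{k <= 0} is represented by
   v : nat -> R with v n = u_{-n} *)
Definition in_Kneg (D : set R) (L : R) (v : nat -> R) : Prop := forall n, inDL D L (v n).

Definition input_cptp {N : nat} (D : set R) (L : R)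
  (T : R -> 'M[R[i]]_N -> 'M[R[i]]_N) : Prop :=
  forall x, inDL D L x -> cptp (T x).

Definition convergent {N : nat} (D : set R) (L : R)
  (T : R -> 'M[R[i]]_N -> 'M[R[i]]_N) : Prop :=
  input_cptp D L T /\
  exists delta : nat -> R, delta @ \oo --> 0 /\
    forall (u : nat -> R) (rho1 rho2 : nat -> 'M[R[i]]_N),
      (forall k, (0 < k)%N -> inDL D L (u k)) ->
      is_density (rho1 0%N) -> is_density (rho2 0%N) ->
      (forall k, rho1 k.+1 = T (u k.+1) (rho1 k)) ->
      (forall k, rho2 k.+1 = T (u k.+1) (rho2 k)) ->
      forall k, (0 < k)%N -> hs_norm (rho1 k - rho2 k) <= delta k.

(* chain T u k N X = T(u_k) T(u_{k-1}) ... T(u_{k-N}) X *)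
Fixpoint chain {N : nat} (T : R -> 'M[R[i]]_N -> 'M[R[i]]_N) (u : int -> R)
  (k : int) (n : nat) (X : 'M[R[i]]_N) : 'M[R[i]]_N :=
  match n with
  | 0%N => T (u k) X
  | n'.+1 => chain T u k n' (T (u (k - n'.+1%:Z)) X)
  end.

Definition mx_cvg {N : nat} (s : nat -> 'M[R[i]]_N) (l : 'M[R[i]]_N) : Prop :=
  forall e : R, 0 < e -> exists n0 : nat, forall n, (n0 <= n)%N -> hs_norm (s n - l) < e.

(* filters K_L(D) -> R^Z (represented as total functions; only values on K_L(D) matter) *)
Definition filterR := (int -> R) -> (int -> R).

(* M is the filter M_h^T induced by T and h: for every input in K_L(D), every time k
   and every choice of initial density operators rho_{-N}, the limit
   lim_N T(u_k)...T(u_{k-N}) rho_{-N} exists and M(u)_k = h(limit)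
   (in particular, independent of the initial density operators). *)
Definition induced_filter {N : nat} (D : set R) (L : R)
  (T : R -> 'M[R[i]]_N -> 'M[R[i]]_N) (h : 'M[R[i]]_N -> R) (M : filterR) : Prop :=
  forall u, in_K D L u -> forall (k : int) (rho : nat -> 'M[R[i]]_N),
    (forall n, is_density (rho n)) ->
    exists sigma, mx_cvg (fun n => chain T u k n (rho n)) sigma /\ M u k = h sigma.

Definition shift (tau : int) (u : int -> R) : int -> R := fun k => u (k - tau).

Definition time_invariant (D : set R) (L : R) (M : filterR) : Prop :=
  forall u, in_K D L u -> forall tau k, M (shift tau u) k = shift tau (M u) k.

Definition causal (D : set R) (L : R) (M : filterR) : Prop :=
  forall u v, in_K D L u -> in_K D L v ->
    forall k, (forall j, j <= k -> u j = v j) -> M u k = M v k.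

Definition extZ (v : nat -> R) : int -> R :=
  fun k => if k <= 0 then v (absz k) else v 0%N.

Definition functional (M : filterR) : (nat -> R) -> R := fun v => M (extZ v) 0.

Definition null_sequence (w : nat -> R) : Prop :=
  [/\ (forall n, 0 < w n <= 1), (forall n, w n.+1 <= w n) & w @ \oo --> 0].

Definition wnorm (w : nat -> R) (v : nat -> R) : R :=
  sup (range (fun n => `|v n| * w n)).

Definition w_continuous (D : set R) (L : R) (w : nat -> R) (F : (nat -> R) -> R) : Prop :=
  forall v, in_Kneg D L v -> forall e : R, 0 < e -> exists2 d : R, 0 < d &
    forall v', in_Kneg D L v' -> wnorm w (fun n => v n - v' n) < d ->
      `|F v - F v'| < e.

Definition w_fading_memory (D : set R) (L : R) (w : nat -> R) (M : filterR) : Prop :=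
  [/\ time_invariant D L M, causal D L M & w_continuous D L w (functional M)].

(* the family of functionals corresponding to a family of filters
   (functionals are identified by their values on K_L^-(D)) *)
Definition functionals_of (D : set R) (L : R) (Mw : set filterR) : set ((nat -> R) -> R) :=
  [set F | exists2 M, Mw M & forall v, in_Kneg D L v -> F v = functional M v].

End QRC.

From HB Require Import structures.
From Pilot Require Import Defs.
From mathcomp Require Import all_boot all_order all_algebra.
From mathcomp Require Import all_classical all_reals all_analysis.
From mathcomp Require Import complex mxtens.
From mathcomp Require Import ring lra.
From mathcomp Require finmap.

Set Implicit Arguments.
Unset Strict Implicit.
Unset Printing Implicit Defensive.

Import Order.TTheory GRing.Theory Num.Theory.
Import numFieldNormedType.Exports.
Local Open Scope classical_set_scope.
Local Open Scope ring_scope.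

(** On K = K_L^-(D) every ||.||_w-ball around v contains a neighbourhood of v
for the product topology: sequences of K that are close to v in their first N
coordinates are w-close to v, the tail contributing at most 2 L w_N.  So
w-fading-memory functionals are continuous on K for the product topology, in
which K is compact by Tychonoff's theorem, and the Stone-Weierstrass theorem
applies to F_w.  In its lattice-form proof, |f| is approximated by polynomials
in f through the iteration q |-> q + (s^2 - q^2)/2, which increases from 0 to s
with s - q_n <= 2/n uniformly for s in [0, 1].  Finally, time invariance and
causality give M(u)_k = F_M(u_{<=k}) for every fading-memory filter M, so
approximating functionals uniformly on K approximates filters uniformly on
K_L(D). *)

Definition sqrt_iter {R : fieldType} (X : R) (n : nat) : R :=
  iter n (fun q => q + (X - q ^+ 2) / 2) 0.

Lemma sqrt_iter_invariant (R : realFieldType) (s : R) (n : nat) : 0 <= s <= 1 ->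
  let q := sqrt_iter (s ^+ 2) n in 0 <= q <= s /\ (s - q) * (1 + n%:R * s / 2) <= s.
Proof.
case/andP => s0 s1; elim: n => [|n [/andP[q0 qs] IH]] /=.
  by rewrite mul0r; split; [rewrite lexx | lra].
set q := sqrt_iter _ n in q0 qs IH *.
have gap_next : s - (q + (s ^+ 2 - q ^+ 2) / 2) = (s - q) * (1 - (s + q) / 2).
  by field.
have gap_next_ge0 : 0 <= (s - q) * (1 - (s + q) / 2) by apply: mulr_ge0; lra.
rewrite -[n.+1%:R]natr1; split.
  rewrite -subr_ge0 -[X in _ && X]subr_ge0 gap_next gap_next_ge0 andbT.
  have : 0 <= (s - q) * (s + q) by apply: mulr_ge0; lra.
  by rewrite !expr2; nra.
rewrite gap_next; set e := s - q in IH *.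
have e0 : 0 <= e by rewrite subr_ge0.
have ns0 : 0 <= n%:R * s by apply: mulr_ge0.
have contract : e * (1 - (s + q) / 2) <= e * (1 - s / 2) by apply: ler_wpM2l; lra.
apply: le_trans (ler_wpM2r _ contract) _; first lra.
have : 0 <= e * (s * s * (n%:R + 1)) by rewrite !mulr_ge0 // addr_ge0.
have -> : e * (1 - s / 2) * (1 + (n%:R + 1) * s / 2) =
  e * (1 + n%:R * s / 2) - e * (s * s * (n%:R + 1)) / 4 by field.
lra.
Qed.

Lemma sqrt_iter_error (R : realFieldType) (s : R) (n : nat) : 0 <= s <= 1 ->
  0 <= s - sqrt_iter (s ^+ 2) n /\ (s - sqrt_iter (s ^+ 2) n) * n%:R <= 2.
Proof.
move=> s01; have := @sqrt_iter_invariant R s n s01.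
case/andP: s01 => s0 s1 /=; set q := sqrt_iter _ n => -[/andP[q0 qs] H].
split; first lra.
have [s_eq0|s_neq0] := eqVneq s 0; first by rewrite (_ : s - q = 0) ?mul0r //; lra.
have : 0 < s by rewrite lt_def s_neq0.
have : 0 <= n%:R :> R by [].
nra.
Qed.

Lemma compact_nbhs_finite_cover (T : topologicalType) (K : set T)
    (U : T -> set T) :
  compact K -> (forall x, K x -> nbhs x (U x)) ->
  exists2 s : seq T, (forall x, x \in s -> K x) &
    forall z, K z -> exists2 x, x \in s & U x z.
Proof.
have [[x0 _]|K0] := pselect (K !=set0); last first.
  by exists [::] => // z Kz; case: K0; exists z.
(* [compact_cover] is stated for pointed spaces; any point of K will do. *)
pose pT := HB.pack_for ptopologicalType T (isPointed.Build T x0).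
move=> cK0 nU; have cK : @cover_compact pT K by rewrite -compact_cover.
have [s sK Ks] : finite_subset_cover K (fun x => interior (U x)) K.
  apply: cK => [x _|x Kx]; first exact: open_interior.
  by exists x => //; rewrite /interior; exact: nU.
exists (finmap.enum_fset s) => [x /sK|z /Ks [x sx /interior_subset Uxz]].
  by rewrite inE.
by exists x.
Qed.

Section StoneWeierstrass.
Context {R : realType} {T : topologicalType} (K : set T).
Hypothesis compactK : compact K.

Lemma continuous_within_near (f : T -> R) x e :
  {within K, continuous f} -> K x -> 0 < e ->
  nbhs x [set z | K z -> `|f x - f z| < e].
Proof.
move=> /subspace_continuousP /(_ x) fc Kx e0.
by have /cvgrPdist_lt /(_ e e0) := fc Kx.
Qed.

Lemma continuous_within_bounded {f : T -> R} : {within K, continuous f} ->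
  exists2 B, 0 < B & forall x, K x -> `|f x| <= B.
Proof.
move=> fc; have [M [_ HM]] := compact_bounded (continuous_compact fc compactK).
exists (`|M| + 1) => [|x Kx]; first by rewrite ltr_pwDr ?normr_ge0.
by apply: (HM (`|M| + 1)); [rewrite (le_lt_trans (ler_norm M)) ?ltrDl | exists x].
Qed.

Variable A : set (T -> R).
Hypothesis Aadd : forall f g, A f -> A g -> A (fun x => f x + g x).
Hypothesis Ascale : forall (c : R) f, A f -> A (fun x => c * f x).
Hypothesis Amul : forall f g, A f -> A g -> A (fun x => f x * g x).
Hypothesis Aconst : forall c : R, A (fun _ => c).
Hypothesis Asep : forall x y, K x -> K y -> x <> y -> exists2 f, A f & f x <> f y.
Hypothesis Acont : forall {f}, A f -> {within K, continuous f}.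

Definition uapprox (f : T -> R) :=
  forall e, 0 < e -> exists2 g, A g & forall x, K x -> `|f x - g x| <= e.

Lemma A_sqrt_iter f n : A f -> A (fun x => sqrt_iter (f x) n).
Proof.
move=> Af; elim: n => [|n IH]; first exact: Aconst.
have -> : (fun x => sqrt_iter (f x) n.+1) = (fun x => sqrt_iter (f x) n +
    2^-1 * (f x + (-1) * (sqrt_iter (f x) n * sqrt_iter (f x) n))).
  by apply/funext => x; rewrite /sqrt_iter /=; ring.
by apply: Aadd => //; apply: Ascale; apply: Aadd => //; apply: Ascale; apply: Amul.
Qed.

Lemma uapprox_normA f : A f -> uapprox (fun x => `|f x|).
Proof.
move=> Af e e0; have [B B0 fB] := continuous_within_bounded (Acont Af).
pose n := (Num.Def.trunc (2 * B / e)).+1.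
have n_gt : 2 * B < n%:R * e by rewrite -ltr_pdivrMr // truncnS_gt.
exists (fun x => B * sqrt_iter (B^-2 * (f x * f x)) n).
  by apply: Ascale; apply: A_sqrt_iter; apply: Ascale; apply: Amul.
(* |f| = B sqrt((f/B)^2), with (f/B)^2 in [0, 1] on K *)
move=> x Kx; pose s := `|f x| / B.
have s01 : 0 <= s <= 1 by rewrite /s divr_ge0 ?(ltW B0) //= ler_pdivrMr // mul1r fB.
have -> : B^-2 * (f x * f x) = s ^+ 2.
  by rewrite /s expr_div_n real_normK ?num_real // expr2 mulrC.
have -> : `|f x| - B * sqrt_iter (s ^+ 2) n = B * (s - sqrt_iter (s ^+ 2) n).
  by rewrite /s; field; rewrite gt_eqF.
have [err0 err] := sqrt_iter_error n s01.
have := ler_wpM2l (ltW B0) err.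
rewrite ger0_norm ?mulr_ge0 ?(ltW B0) //; have : 0 < n%:R :> R by []; nra.
Qed.

Lemma uapproxA f : A f -> uapprox f.
Proof. by move=> Af e e0; exists f => // x _; rewrite subrr normr0 ltW. Qed.

Lemma uapproxD f g : uapprox f -> uapprox g -> uapprox (fun x => f x + g x).
Proof.
move=> af ag e e0; have e2 : 0 < e / 2 by rewrite divr_gt0.
have [f' Af' ff'] := af _ e2; have [g' Ag' gg'] := ag _ e2.
exists (fun x => f' x + g' x) => [|x Kx]; first exact: Aadd.
rewrite opprD addrACA; apply: le_trans (ler_normD _ _) _.
by have := ff' x Kx; have := gg' x Kx; lra.
Qed.

Lemma uapproxZ c f : uapprox f -> uapprox (fun x => c * f x).
Proof.
move=> af e e0; have c1 : 0 < `|c| + 1 by rewrite ltr_pwDr ?normr_ge0.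
have [g Ag fg] := af _ (divr_gt0 e0 c1).
exists (fun x => c * g x) => [|x Kx]; first exact: Ascale.
rewrite -mulrBr normrM; apply: le_trans (ler_wpM2l (normr_ge0 c) (fg x Kx)) _.
by rewrite mulrA ler_pdivrMr // mulrC ler_wpM2l ?(ltW e0) // lerDl.
Qed.

Lemma uapprox_norm f : uapprox f -> uapprox (fun x => `|f x|).
Proof.
move=> af e e0; have e2 : 0 < e / 2 by rewrite divr_gt0.
have [g Ag fg] := af _ e2; have [h Ah gh] := uapprox_normA Ag e2.
exists h => // x Kx; rewrite -(subrK `|g x| `|f x|) -addrA.
apply: le_trans (ler_normD _ _) _; have := ler_dist_dist (f x) (g x).
by have := fg x Kx; have := gh x Kx; lra.
Qed.

Definition uapprox_cont f := uapprox f /\ {within K, continuous f}.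

Lemma uapprox_contA f : A f -> uapprox_cont f.
Proof. by move=> Af; split; [exact: uapproxA | exact: Acont]. Qed.

Lemma uapprox_contD f g : uapprox_cont f -> uapprox_cont g ->
  uapprox_cont (fun x => f x + g x).
Proof.
move=> [af cf] [ag cg]; split => [|x]; first exact: uapproxD.
exact: (continuousD (cf x) (cg x)).
Qed.

Lemma uapprox_contZ c f : uapprox_cont f -> uapprox_cont (fun x => c * f x).
Proof.
move=> [af cf]; split => [|x]; first exact: uapproxZ.
apply: continuousM (cf x); exact: cst_continuous.
Qed.

Lemma uapprox_cont_norm f : uapprox_cont f -> uapprox_cont (fun x => `|f x|).
Proof.
move=> [af cf]; split => [|x]; first exact: uapprox_norm.
exact: (cvg_norm (cf x)).
Qed.

Lemma uapprox_cont_min f g : uapprox_cont f -> uapprox_cont g ->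
  uapprox_cont (fun x => Num.min (f x) (g x)).
Proof.
move=> cf cg; have -> : (fun x => Num.min (f x) (g x)) =
    (fun x => 2^-1 * ((f x + g x) + (-1) * `|f x + (-1) * g x|)).
  by apply/funext => x; rewrite minr_absE !mulN1r mulrC.
apply/uapprox_contZ/uapprox_contD; first exact: uapprox_contD.
by apply/uapprox_contZ/uapprox_cont_norm/uapprox_contD => //; exact: uapprox_contZ.
Qed.

Lemma uapprox_cont_max f g : uapprox_cont f -> uapprox_cont g ->
  uapprox_cont (fun x => Num.max (f x) (g x)).
Proof.
move=> cf cg; have -> : (fun x => Num.max (f x) (g x)) =
    (fun x => 2^-1 * ((f x + g x) + `|f x + (-1) * g x|)).
  by apply/funext => x; rewrite maxr_absE mulN1r mulrC.
apply/uapprox_contZ/uapprox_contD; first exact: uapprox_contD.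
by apply/uapprox_cont_norm/uapprox_contD => //; exact: uapprox_contZ.
Qed.

Lemma uapprox_cont_bigmin (I : Type) (s : seq I) h0 (h : I -> T -> R) :
  uapprox_cont h0 -> (forall i, uapprox_cont (h i)) ->
  uapprox_cont (fun x => \big[Num.min/h0 x]_(i <- s) h i x).
Proof.
move=> ch0 ch; elim: s => [|i s IH]; first by under eq_fun do rewrite big_nil.
by under eq_fun do rewrite big_cons; exact: uapprox_cont_min.
Qed.

Lemma uapprox_cont_bigmax (I : Type) (s : seq I) h0 (h : I -> T -> R) :
  uapprox_cont h0 -> (forall i, uapprox_cont (h i)) ->
  uapprox_cont (fun x => \big[Num.max/h0 x]_(i <- s) h i x).
Proof.
move=> ch0 ch; elim: s => [|i s IH]; first by under eq_fun do rewrite big_nil.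
by under eq_fun do rewrite big_cons; exact: uapprox_cont_max.
Qed.

Lemma A_interpolate2 (F : T -> R) x y : K x -> K y ->
  exists2 h, A h & h x = F x /\ h y = F y.
Proof.
move=> Kx Ky; have [<-|xy] := pselect (x = y); first by exists (fun=> F x).
have [g Ag gxy] := Asep Kx Ky xy.
have gxy0 : g y - g x != 0 by rewrite subr_eq0 eq_sym; apply/eqP.
exists (fun z => F x + (F y - F x) / (g y - g x) * (g z + (-1) * g x)).
  by apply: Aadd => //; apply: Ascale; apply: Aadd => //; exact: Ascale.
by split; [rewrite mulN1r subrr mulr0 addr0 | field].
Qed.

Lemma uapprox_cont_below F x e : {within K, continuous F} -> K x -> 0 < e ->
  exists2 g, uapprox_cont g & g x = F x /\ forall z, K z -> g z < F z + e.
Proof.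
move=> cF Kx e0; have e2 : 0 < e / 2 by rewrite divr_gt0.
have /choice[h hP] : forall y, exists hy : T -> R,
    A hy /\ (K y -> hy x = F x /\ hy y = F y).
  move=> y; have [Ky|nKy] := pselect (K y); last by exists (fun=> 0); split.
  by have [hy Ahy hyP] := A_interpolate2 F Kx Ky; exists hy.
have near_below y : K y -> nbhs y [set z | K z -> h y z < F z + e].
  move=> Ky; have [_ hyy] := (hP y).2 Ky.
  apply: filterS2 (continuous_within_near (Acont (hP y).1) Ky e2)
    (continuous_within_near cF Ky e2) => z + + Kz.
  by rewrite /= hyy !ltr_norml => /(_ Kz)/andP[? ?] /(_ Kz)/andP[? ?]; lra.
have [s sK sP] := compact_nbhs_finite_cover compactK near_below.
exists (fun z => \big[Num.min/h x z]_(y <- s) h y z).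
  by apply: uapprox_cont_bigmin => [|y]; exact/uapprox_contA/(hP _).1.
split=> [|z Kz].
  have [hxx _] := (hP x).2 Kx.
  rewrite big_seq bigmin_eq_id // => y sy.
  by rewrite hxx ((hP y).2 (sK y sy)).1.
have [y sy hyz] := sP z Kz; apply: le_lt_trans (hyz Kz); exact: ge_bigmin_seq.
Qed.

Theorem stone_weierstrass F : {within K, continuous F} -> uapprox F.
Proof.
move=> cF e e0; have e2 : 0 < e / 2 by rewrite divr_gt0.
have [[x0 Kx0]|K0] := pselect (K !=set0); last first.
  by exists (fun=> 0) => // x Kx; case: K0; exists x.
have /choice[g gP] : forall x, exists gx, uapprox_cont gx /\
    (K x -> gx x = F x /\ forall z, K z -> gx z < F z + e / 2).
  move=> x; have [Kx|nKx] := pselect (K x); last first.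
    by exists (fun=> 0); split => //; exact/uapprox_contA/Aconst.
  by have [gx ? ?] := uapprox_cont_below cF Kx e2; exists gx.
have near_above x : K x -> nbhs x [set z | K z -> F z - e / 2 < g x z].
  move=> Kx; have [gxx _] := (gP x).2 Kx.
  have e4 : 0 < e / 4 by rewrite divr_gt0.
  apply: filterS2 (continuous_within_near (gP x).1.2 Kx e4)
    (continuous_within_near cF Kx e4) => z + + Kz.
  by rewrite /= gxx !ltr_norml => /(_ Kz)/andP[? ?] /(_ Kz)/andP[? ?]; lra.
have [s sK sP] := compact_nbhs_finite_cover compactK near_above.
pose G z := \big[Num.max/g x0 z]_(x <- s) g x z.
have [aG _] : uapprox_cont G by apply: uapprox_cont_bigmax => [|x]; exact: (gP _).1.
have [a Aa Ga] := aG _ e2; exists a => // z Kz.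
have G_lt : G z < F z + e / 2.
  rewrite /G big_seq; apply: bigmax_lt => [|x sx]; first exact: ((gP x0).2 Kx0).2.
  exact: ((gP x).2 (sK x sx)).2.
have G_gt : F z - e / 2 < G z.
  have [x sx gxz] := sP z Kz; apply: lt_le_trans (gxz Kz) _; exact: le_bigmax_seq.
rewrite -(subrK (G z) (F z)) -addrA; apply: le_trans (ler_normD _ _) _.
have : `|F z - G z| <= e / 2 by rewrite ler_norml; apply/andP; split; lra.
by have := Ga z Kz; lra.
Qed.

End StoneWeierstrass.

Import ArrowAsProduct.

Section FadingMemory.
Context {R : realType} (D : set R) (L : R).

Lemma in_Kneg_compact : compact D -> compact (in_Kneg D L).
Proof.
move=> cD; have cDL : compact (D `&` [set x | `|x| <= L]).
  apply: compact_closedI => //.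
  rewrite (_ : [set x | `|x| <= L] = (fun x : R => `|x|) @^-1` [set x | x <= L]) //.
  by apply: closed_comp; [move=> x _; exact: norm_continuous | exact: closed_le].
exact: (@tychonoff nat (fun=> R) (fun=> D `&` [set x | `|x| <= L]) (fun=> cDL)).
Qed.

Variable w : nat -> R.
Hypothesis w_null : null_sequence w.
Hypothesis L_gt0 : 0 < L.

Lemma wnorm_le_head v x N r : in_Kneg D L v -> in_Kneg D L x -> 2 * L * w N <= r ->
  (forall n, (n < N)%N -> `|v n - x n| < r) -> wnorm w (fun n => v n - x n) <= r.
Proof.
case: w_null => w01 /nonincreasing_seqP w_dec _ Kv Kx wN vx.
apply: ge_sup => [|_ [n _ <-] /=]; first by exists (`|v 0%N - x 0%N| * w 0%N), 0%N.
have /andP[wn0 wn1] := w01 n.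
have [nN|Nn] := ltnP n N; first by apply: le_trans _ (ltW (vx n nN)); rewrite ler_piMr.
have vxL : `|v n - x n| <= 2 * L.
  by apply: le_trans (ler_normB _ _) _; have := (Kv n).2; have := (Kx n).2; lra.
by apply: le_trans _ wN; apply: ler_pM => //; [exact: ltW | exact: w_dec].
Qed.

Lemma null_sequence_le c : 0 < c -> exists N, w N <= c.
Proof.
case: w_null => w01 _ /cvgrPdist_le w0 c0; have [N _ wN] := w0 c c0.
exists N; have := wN N (leqnn N).
by rewrite sub0r normrN ger0_norm // ltW // (andP (w01 N)).1.
Qed.

Lemma w_continuous_within F :
  w_continuous D L w F -> {within in_Kneg D L, continuous F}.
Proof.
move=> wcF; apply/subspace_continuousP => v Kv; apply/cvgrPdist_lt => e e0.
have [d d0 dF] := wcF v Kv e e0; have d2 : 0 < d / 2 by rewrite divr_gt0.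
have [N wN] := null_sequence_le (divr_gt0 d2 (mulr_gt0 (ltr0n _ 2) L_gt0)).
have head_near : \forall z \near v, forall n : 'I_N, `|v n - (z : nat -> R) n| < d / 2.
  apply: (@filter_forall _ _ _ (nbhs v)) => n.
  by have /cvgrPdist_lt/(_ _ d2) := @proj_continuous nat (fun=> R) n v.
apply: filterS head_near => z vz Kz; apply: dF => //.
apply: (@le_lt_trans _ _ (d / 2)); last lra.
apply: wnorm_le_head Kv Kz _ (fun n nN => vz (Ordinal nN)).
by rewrite mulrC -ler_pdivlMr ?mulr_gt0.
Qed.

End FadingMemory.

Section FilterFunctional.
Context {R : realType} (D : set R) (L : R).

Lemma filter_functionalE (M : filterR R) u k :
  time_invariant D L M -> causal D L M -> in_K D L u ->
  M u k = functional M (fun n => u (k - n%:Z)).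
Proof.
move=> TI CA Ku; have -> : M u k = M (Defs.shift (- k) u) 0.
  by rewrite (TI u Ku (- k) 0) /Defs.shift sub0r opprK.
apply: CA => [j|j|j j0]; rewrite /extZ /Defs.shift; first exact: Ku.
  by case: ifP => _; exact: Ku.
by rewrite j0 abszE ler0_norm // !opprK addrC.
Qed.

End FilterFunctional.

Theorem theorem3 (R : realType) (L : R) (D : set R) (w : nat -> R)
    (Mw : set (filterR R)) :
  0 < L -> compact D -> null_sequence w ->
  (* each member of M_w is a w-fading memory filter M_h^T, T convergent on n qubits *)
  (forall M, Mw M -> exists (n : nat) (T : R -> 'M[R[i]]_(2 ^ n) -> 'M[R[i]]_(2 ^ n))
                           (h : 'M[R[i]]_(2 ^ n) -> R),
      [/\ convergent D L T, induced_filter D L T h M & w_fading_memory D L w M]) ->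
  (* F_w is a subalgebra containing the constants and separating points *)
  (forall F G, functionals_of D L Mw F -> functionals_of D L Mw G ->
     functionals_of D L Mw (fun v => F v + G v)) ->
  (forall (c : R) F, functionals_of D L Mw F -> functionals_of D L Mw (fun v => c * F v)) ->
  (forall F G, functionals_of D L Mw F -> functionals_of D L Mw G ->
     functionals_of D L Mw (fun v => F v * G v)) ->
  (forall c : R, functionals_of D L Mw (fun _ => c)) ->
  (forall v1 v2, in_Kneg D L v1 -> in_Kneg D L v2 -> v1 <> v2 ->
     exists2 F, functionals_of D L Mw F & F v1 <> F v2) ->
  forall (Mstar : filterR R) (eps : R), w_fading_memory D L w Mstar -> 0 < eps ->
  exists2 M, Mw M &
    forall u, in_K D L u ->
      exists2 e : R, e < eps & forall k : int, `|Mstar u k - M u k| <= e.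
Proof.
move=> L0 cD wnull HMw Aadd Ascale Amul Aconst Asep Mstar eps [TI CA WC] eps0.
have Acont F : functionals_of D L Mw F -> {within in_Kneg D L, continuous F}.
  case=> M /HMw[n [T [h [_ _ [_ _ WCM]]]]] FM.
  apply: (@w_continuous_within _ _ _ _ wnull L0 F) => v Kv e e0.
  have [d d0 Hd] := WCM v Kv e e0; exists d => // v' Kv' /(Hd v' Kv').
  by rewrite !FM.
have [a [M MM aM] Ma] := stone_weierstrass (in_Kneg_compact (L := L) cD)
  Aadd Ascale Amul Aconst Asep Acont (w_continuous_within wnull L0 WC)
  (divr_gt0 eps0 (ltr0n _ 2)).
have [n [T [h [_ _ [TIM CAM _]]]]] := HMw M MM.
exists M => // u Ku; exists (eps / 2) => [|k]; first lra.
rewrite (filter_functionalE k TI CA Ku) (filter_functionalE k TIM CAM Ku) -aM.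
  exact: Ma.
by move=> j; exact: Ku.
Qed.
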